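(* Let $I$ be an ideal of a Noetherian ring $A$. Then $I_>\subseteq{}^*I$.
   Context: For $a\in A$, $\operatorname{ord}_I(a)=n$ if $a\in I^n\setminus I^{n+1}$ and $\infty$ if $a\in\bigcap_n I^n$; $\overline{v}_I(a)=\lim_{n\to\infty}\operatorname{ord}_I(a^n)/n$ (the limit exists, possibly $\infty$); $I_>=\{a\in A\mid\overline{v}_I(a)>1\}$. ${}^*I$ is the weak subintegral closure of $I$: $b\in A$ lies in ${}^*I$ if there exist $q\in\mathbb{N}$ and $a_i\in I^i$ ($1\le i\le 2q+1$) with $b^n+\sum_{i=1}^n\binom{n}{i}a_ib^{n-i}=0$ for all $q+1\le n\le 2q+1$. *)

From HB Require Import structures.
From mathcomp Require Import all_boot all_order all_algebra.
From mathcomp Require Import all_classical all_reals.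
From mathcomp Require Import ereal topology sequences.
From mathcomp Require Import Rstruct Rstruct_topology.
Set Implicit Arguments. Unset Strict Implicit. Unset Printing Implicit Defensive.
Import Order.TTheory GRing.Theory Num.Theory.
Local Open Scope ring_scope.
Local Open Scope classical_set_scope.

Section IdealDefs.
Variable A : comPzRingType.

Definition is_ideal (I : set A) : Prop :=
  I 0 /\ (forall x y, I x -> I y -> I (x + y)) /\ (forall r x, I x -> I (r * x)).

Definition noetherian : Prop :=
  forall J : nat -> set A, (forall k, is_ideal (J k)) ->
    (forall k, J k `<=` J k.+1) ->
    exists N, forall k, (N <= k)%N -> J k = J N.

Fixpoint ideal_pow (I : set A) (n : nat) : set A :=
  match n with
  | 0 => setT
  | n'.+1 => fun z => exists s : seq (A * A),
      (forall p, p \in s -> I p.1 /\ ideal_pow I n' p.2) /\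
      z = \sum_(p <- s) p.1 * p.2
  end.

(* ord_I(a) = n if a in I^n \ I^(n+1), +oo if a in all I^n.
   Since I^n is decreasing, this is the supremum of {n | a in I^n}. *)
Definition ordI (I : set A) (a : A) : \bar Rdefinitions.R :=
  ereal_sup [set (n%:R)%:E | n in [set n : nat | ideal_pow I n a]].

Definition vbarI (I : set A) (a : A) : \bar Rdefinitions.R :=
  lim ((fun n : nat => ordI I (a ^+ n.+1) * ((n.+1)%:R^-1)%:E)%E @ \oo).

Definition I_gt (I : set A) : set A := [set a | (1 < vbarI I a)%E].

Definition wsi_closure (I : set A) : set A :=
  [set b | exists (q : nat) (a : nat -> A),
     (forall i, (1 <= i <= 2 * q + 1)%N -> ideal_pow I i (a i)) /\
     (forall n, (q + 1 <= n <= 2 * q + 1)%N ->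
        b ^+ n + \sum_(1 <= i < n.+1) (a i * b ^+ (n - i)) *+ 'C(n, i) = 0)].

End IdealDefs.

(* Only one property of I_> is used: if vbar_I(b) > 1 then ord_I(b^n) > n,
   so b^n lies in I^n, for all large n. Given that, choose a_i := c_i b^i
   with integers c_i vanishing for i <= q; then a_i lies in I^i, and each
   equation of the weak subintegrality system collapses to
   (1 + sum_i c_i C(n,i)) b^n = 0. The integer conditions
   1 + sum_(1 <= i <= n) c_i C(n,i) = 0 for q < n <= 2q+1 form a unitriangular
   system in c_(q+1), ..., c_(2q+1) and are solved one n at a time. *)
From mathcomp Require Import all_boot all_order all_algebra.
From mathcomp Require Import all_classical all_reals ereal topology sequences normedtype.
From mathcomp Require Import Rstruct Rstruct_topology.
From mathcomp Require Import zify.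
Import Order.TTheory GRing.Theory Num.Theory.
Local Open Scope ring_scope.
Local Open Scope classical_set_scope.

Section IdealPowers.
Variables (A : comPzRingType) (I : set A).

Lemma ideal_pow_succ_sub k z : ideal_pow I k.+1 z -> ideal_pow I k z.
Proof.
elim: k z => [//|k IHk] z [s [Hs ->]].
by exists s; split => // p /Hs [Ip1 Ip2]; split => //; apply: IHk.
Qed.

Lemma ideal_pow_antimono j k z : (j <= k)%N -> ideal_pow I k z -> ideal_pow I j z.
Proof.
move=> /subnK <-; elim: (k - j)%N z => [//|d IHd] z Hz.
by apply: IHd; apply: ideal_pow_succ_sub; rewrite -addSn.
Qed.

Lemma ideal_pow_succ0 k : ideal_pow I k.+1 0.
Proof. by exists [::]; rewrite big_nil. Qed.

Lemma ideal_pow_succMl k r z :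
  is_ideal I -> ideal_pow I k.+1 z -> ideal_pow I k.+1 (r * z).
Proof.
move=> [_ [_ IM]] [s [Hs ->]].
exists [seq (r * p.1, p.2) | p <- s]; split.
  by move=> p /mapP [p' /Hs [Ip1 Ip2] ->]; split => //; apply: IM.
by rewrite big_map mulr_sumr; apply: eq_bigr => p _; rewrite mulrA.
Qed.

Lemma ideal_pow_ordI_gt n a :
  ((n%:R)%:E < ordI I a)%E -> ideal_pow I n.+1 a.
Proof.
move=> /ereal_sup_gt [_ [m Ham <-]]; rewrite lte_fin ltr_nat => ltnm.
exact: ideal_pow_antimono ltnm Ham.
Qed.

End IdealPowers.

Lemma unitriangular_system_solvable (w : nat -> nat -> int) (q m : nat) :
  (forall n, w n n = 1) ->
  exists c : nat -> int,
    (forall i, (i <= q)%N -> c i = 0) /\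
    (forall n, (q < n <= q + m)%N -> 1 + \sum_(1 <= i < n.+1) c i * w n i = 0).
Proof.
move=> wnn; elim: m => [|m [c [c0 csol]]].
  by exists (fun=> 0); split => // n; rewrite addn0 => /andP[/leq_trans H/H]; rewrite ltnn.
pose n0 := (q + m.+1)%N.
pose c' i := if i == n0 then - (1 + \sum_(1 <= j < n0) c j * w n0 j) else c i.
have c'E i : (i < n0)%N -> c' i = c i by move=> lti; rewrite /c' ltn_eqF.
exists c'; split=> [i leiq|n /andP[ltqn len]].
  by rewrite c'E ?c0 //; rewrite /n0; lia.
have [ltnn0|] := ltnP n n0.
  rewrite -[RHS](csol n); last by apply/andP; split => //; rewrite /n0 in ltnn0; lia.
  by congr (_ + _); apply: eq_big_nat => i /andP[_ lein]; rewrite c'E //; lia.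
move=> len0; have {len len0} -> : n = n0 by rewrite /n0 in len len0 *; lia.
rewrite big_nat_recr /=; last by rewrite /n0; lia.
rewrite (@eq_big_nat _ _ _ 1 n0 _ (fun i => c i * w n0 i)); last first.
  by move=> i /andP[_ lti]; rewrite c'E.
by rewrite /c' eqxx wnn mulr1 addrA addrN.
Qed.

Lemma wsi_closure_of_pow_eventually (A : comPzRingType) (I : set A) (b : A) (q : nat) :
  is_ideal I -> (forall n, (q <= n)%N -> ideal_pow I n (b ^+ n)) ->
  wsi_closure I b.
Proof.
move=> idI powb.
have [c [c0 csol]] := @unitriangular_system_solvable (fun n i => ('C(n, i))%:Z) q q.+1
  (fun n => congr1 Posz (binn n)).
exists q, (fun i => (c i)%:~R * b ^+ i); split.
  move=> [//|k] /andP[_ lek].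
  have [lekq|ltqk] := leqP k.+1 q; first by rewrite c0 // mul0r; apply: ideal_pow_succ0.
  by apply: ideal_pow_succMl => //; apply: powb; rewrite ltnW.
move=> n /andP[lt_qn len].
have -> : \sum_(1 <= i < n.+1) ((c i)%:~R * b ^+ i * b ^+ (n - i)) *+ 'C(n, i)
        = \sum_(1 <= i < n.+1) (c i * ('C(n, i))%:Z)%:~R * b ^+ n.
  apply: eq_big_nat => i /andP[_ lein].
  by rewrite -mulrA -exprD subnKC // -mulrnAl intrM mulrzr.
rewrite -mulr_suml -[X in X + _]mul1r -mulrDl -rmorph_sum -[1]/(1%:~R) -intrD.
by rewrite csol ?mul0r //; apply/andP; split; lia.
Qed.

Lemma I_gt_pow_eventually (A : comPzRingType) (I : set A) (b : A) :
  I_gt I b -> exists N, forall n, (N <= n)%N -> ideal_pow I n (b ^+ n).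
Proof.
move=> vb_gt1; rewrite /I_gt /= /vbarI in vb_gt1; set u := (fun n : nat => _) in vb_gt1.
(* a divergent sequence has limit [point], which is not above 1 *)
have cvg_u : cvgn u.
  apply: contrapT => ncvg; move: vb_gt1; rewrite /lim /lim_in getPN.
    by rewrite lte_fin ltr10.
  by move=> l Hl; apply: ncvg; exact: (@getI _ (fun l0 => nbhs (u x @[x --> \oo]) --> l0) l Hl).
have [N _ u_gt1] := cvg_u _ (open_ereal_gt' vb_gt1).
have ordI_gt n : (N <= n)%N -> ((n.+1%:R)%:E < ordI I (b ^+ n.+1))%E.
  move=> leNn; rewrite ltNge; apply/negP => ord_le.
  move: (u_gt1 n leNn); rewrite /= /u ltNge => /negP; apply.
  apply: (le_trans (lee_wpmul2r _ ord_le)); first by rewrite lee_fin invr_ge0.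
  by rewrite -EFinM mulfV // pnatr_eq0.
by exists N.+1 => -[//|n] /ordI_gt /ideal_pow_ordI_gt /ideal_pow_succ_sub.
Qed.

Theorem proposition4p4 (A : comPzRingType) (I : set A) :
  noetherian A -> is_ideal I -> (I_gt I `<=` wsi_closure I)%classic.
Proof.
move=> _ idI b /I_gt_pow_eventually [N powb].
exact: wsi_closure_of_pow_eventually idI powb.
Qed.
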